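(* Let $0<p<1$ and $\alpha>-1$. For integers $k\ge1$ and $B$ with $1\le B\le k$, set $$p_{k+1}=1-\frac{(1-p)(k+\alpha B)}{k(1+\alpha p)+\alpha(1-p)}.$$ If $p\ge 1/2$, then $p_{k+1}\ge 0$ for all integers $k\ge 1$ and all integers $1\le B\le k$. If $p<1/2$, then $p_{k+1}\ge0$ for all integers $k\ge1$ and all integers $1\le B\le k$ if and only if $$\alpha\le \frac{p}{1-2p}.$$
   Context: This concerns the urn transfer process ($p_k$-model): urns $urn_1,urn_2,\dots$, $F_i(k)$ balls in $urn_i$ after $k$ steps, starting from a single ball in $urn_1$; at stage $k+1$ a new ball is added to $urn_1$ with probability $p_{k+1}=1-\frac{(1-p)\sum_i (i+\alpha)F_i(k)}{k(1+\alpha p)+\alpha(1-p)}$, otherwise a ball is moved from $urn_i$ to $urn_{i+1}$, $urn_i$ chosen with probability $\frac{(1-p)(i+\alpha)F_i(k)}{k(1+\alpha p)+\alpha(1-p)}$. Since $\sum_i iF_i(k)=k$, writing $B(k)=\sum_iF_i(k)$ (which satisfies $1\le B(k)\le k$) gives the formula for $p_{k+1}$ in the claim with $B=B(k)$; the process is well defined at stage $k+1$ exactly when $p_{k+1}\ge0$ (note $p_{k+1}<1$ always). *)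

From Stdlib Require Import Reals.
Open Scope R_scope.

Definition pnext (p alpha : R) (k B : nat) : R :=
  1 - (1 - p) * (INR k + alpha * INR B)
      / (INR k * (1 + alpha * p) + alpha * (1 - p)).

Definition all_nonneg (p alpha : R) : Prop :=
  forall k B : nat, (1 <= k)%nat -> (1 <= B)%nat -> (B <= k)%nat ->
    0 <= pnext p alpha k B.

(** After clearing the positive denominator, [p_{k+1} >= 0] reads
    [alpha (1 - p) (B - 1) <= p (1 + alpha) k].  For [alpha <= 0] the left side
    is nonpositive; for [alpha >= 0] it is largest at [B = k], where the
    inequality becomes [k (alpha (1 - 2p) - p) <= alpha (1 - p)].  This holds
    for every [k] exactly when [alpha (1 - 2p) <= p], which is automatic for
    [p >= 1/2] and equivalent to [alpha <= p / (1 - 2p)] for [p < 1/2]. *)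

From Stdlib Require Import Reals Lra Lia Psatz.
Open Scope R_scope.

Lemma one_sub_div_nonneg_iff (a d : R) : 0 < d -> 0 <= 1 - a / d <-> a <= d.
Proof.
  intros hd; split; intros H.
  - assert (Hd : 0 <= (1 - a / d) * d) by (apply Rmult_le_pos; lra).
    replace ((1 - a / d) * d) with (d - a) in Hd by (field; lra).
    lra.
  - replace (1 - a / d) with ((d - a) * / d) by (field; lra).
    apply Rle_mult_inv_pos; lra.
Qed.

Lemma le_div_iff_mul_le (a b c : R) : 0 < c -> a <= b / c <-> a * c <= b.
Proof.
  intros hc; split; intros H.
  - apply (Rmult_le_compat_r c) in H; [|lra].
    replace (b / c * c) with b in H by (field; lra).
    exact H.
  - apply (Rmult_le_reg_r c); [exact hc|].
    replace (b / c * c) with b by (field; lra).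
    exact H.
Qed.

Lemma INR_ge_1 (n : nat) : (1 <= n)%nat -> 1 <= INR n.
Proof. intros hn; rewrite <- INR_1; apply le_INR, hn. Qed.

Section Positivity.

Variables p alpha : R.
Hypothesis hp0 : 0 < p.
Hypothesis hp1 : p < 1.
Hypothesis ha : -1 < alpha.

Lemma pnext_denominator_pos (x : R) :
  1 <= x -> 0 < x * (1 + alpha * p) + alpha * (1 - p).
Proof.
  intros hx.
  assert (0 < 1 + alpha * p) by nra.
  nra.
Qed.

Lemma pnext_nonneg_iff (k B : nat) : (1 <= k)%nat ->
  0 <= pnext p alpha k B <-> alpha * (1 - p) * (INR B - 1) <= p * (1 + alpha) * INR k.
Proof.
  intros hk; unfold pnext.
  rewrite one_sub_div_nonneg_iff by exact (pnext_denominator_pos _ (INR_ge_1 _ hk)).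
  split; intros; lra.
Qed.

Lemma all_nonneg_of_alpha_bound (hbound : alpha * (1 - 2 * p) <= p) : all_nonneg p alpha.
Proof.
  intros k B hk hB hBk.
  apply pnext_nonneg_iff; [exact hk|].
  pose proof (INR_ge_1 _ hB) as HB.
  pose proof (le_INR _ _ hBk) as HBk.
  destruct (Rle_dec 0 alpha) as [Ha0 | Ha0].
  - assert (alpha * (1 - p) * (INR B - 1) <= alpha * (1 - p) * INR k).
    { apply Rmult_le_compat_l; [apply Rmult_le_pos|]; lra. }
    assert (alpha * (1 - p) * INR k <= p * (1 + alpha) * INR k).
    { apply Rmult_le_compat_r; [apply pos_INR | lra]. }
    lra.
  - assert (0 <= - alpha * (1 - p) * (INR B - 1)).
    { apply Rmult_le_pos; [apply Rmult_le_pos|]; lra. }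
    assert (0 <= p * (1 + alpha) * INR k).
    { apply Rmult_le_pos; [nra | apply pos_INR]. }
    lra.
Qed.

Lemma alpha_bound_of_all_nonneg : all_nonneg p alpha -> alpha * (1 - 2 * p) <= p.
Proof.
  intros Hall.
  destruct (Rle_dec (alpha * (1 - 2 * p)) p) as [|Hgt]; [assumption | exfalso].
  set (c := alpha * (1 - 2 * p) - p).
  assert (Hc : c > 0) by (unfold c; lra).
  destruct (INR_archimed c (alpha * (1 - p)) Hc) as [n Hn].
  assert (Hdiag : 0 <= pnext p alpha (S n) (S n)) by (apply Hall; lia).
  apply pnext_nonneg_iff in Hdiag; [|lia].
  rewrite S_INR in Hdiag.
  unfold c in *; nra.
Qed.

Lemma all_nonneg_iff : all_nonneg p alpha <-> alpha * (1 - 2 * p) <= p.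
Proof. split; [exact alpha_bound_of_all_nonneg | exact all_nonneg_of_alpha_bound]. Qed.

End Positivity.

Theorem lemmaA2 (p alpha : R) (hp0 : 0 < p) (hp1 : p < 1) (ha : -1 < alpha) :
  (1 / 2 <= p -> all_nonneg p alpha) /\
  (p < 1 / 2 -> (all_nonneg p alpha <-> alpha <= p / (1 - 2 * p))).
Proof.
  rewrite all_nonneg_iff by assumption.
  split; intros hp.
  - nra.
  - apply iff_sym, le_div_iff_mul_le; lra.
Qed.
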